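(* In the public project problem with equal participation costs, there is no anonymous feasible Groves mechanism that welfare dominates the VCG mechanism.
   Context: Public project problem (equal participation costs): $n\ge2$ players, decisions $D=\{0,1\}$, $\Theta_i=[0,c]$ with $c>0$, $v_i(d,\theta_i)=d(\theta_i-c/n)$; efficient decision $f(\theta)=1$ iff $\sum_i\theta_i\ge c$. A Groves mechanism has taxes $t_i(\theta)=\sum_{j\ne i}v_j(f(\theta),\theta_j)+h_i(\theta_{-i})$ for arbitrary $h_i$; player $i$'s utility is $v_i(f(\theta),\theta_i)+t_i(\theta)$. It is anonymous if all $h_i$ equal one function $h:[0,c]^{n-1}\to\mathbb{R}$ symmetric in its arguments. The VCG (Clarke) mechanism uses $h_i(\theta_{-i})=-\max_{d\in D}\sum_{j\ne i}v_j(d,\theta_j)$. Feasible: $\sum_it_i(\theta)\le0$ for all $\theta$. $t'$ welfare dominates $t$ if $\sum_i t_i(\theta)\le\sum_i t'_i(\theta)$ for all $\theta$, strictly for some $\theta$. *)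

From Stdlib Require Import Reals List Permutation.
Import ListNotations.
Open Scope R_scope.

Definition sumR (l : list R) : R := fold_right Rplus 0 l.

Definition valid_profile (k : nat) (c : R) (th : list R) : Prop :=
  length th = k /\ Forall (fun x => 0 <= x <= c) th.

(* decisions D = {0,1} encoded as bool (true = 1) *)
Definition dval (d : bool) : R := if d then 1 else 0.

Definition v (n : nat) (c : R) (d : bool) (x : R) : R := dval d * (x - c / INR n).

Definition f (c : R) (th : list R) : bool :=
  if Rle_dec c (sumR th) then true else false.

Definition remove_nth (i : nat) (th : list R) : list R :=
  firstn i th ++ skipn (S i) th.

(* Anonymous Groves mechanism with common function h:
   t_i(theta) = sum_{j<>i} v_j(f theta, theta_j) + h(theta_{-i}) *)
Definition groves_tax (n : nat) (c : R) (h : list R -> R) (th : list R) (i : nat) : R :=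
  sumR (map (v n c (f c th)) (remove_nth i th)) + h (remove_nth i th).

Definition total_tax (n : nat) (c : R) (h : list R -> R) (th : list R) : R :=
  sumR (map (groves_tax n c h th) (seq 0 n)).

Definition vcg_h (n : nat) (c : R) (l : list R) : R :=
  - Rmax (sumR (map (v n c false) l)) (sumR (map (v n c true) l)).

Definition symmetric_h (n : nat) (c : R) (h : list R -> R) : Prop :=
  forall l1 l2, valid_profile (n - 1) c l1 -> valid_profile (n - 1) c l2 ->
    Permutation l1 l2 -> h l1 = h l2.

Definition feasible (n : nat) (c : R) (h : list R -> R) : Prop :=
  forall th, valid_profile n c th -> total_tax n c h th <= 0.

Definition welfare_dominates (n : nat) (c : R) (h' h : list R -> R) : Prop :=
  (forall th, valid_profile n c th -> total_tax n c h th <= total_tax n c h' th) /\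
  (exists th, valid_profile n c th /\ total_tax n c h th < total_tax n c h' th).

From Pilot Require Import Defs.
From Stdlib Require Import Reals List Permutation.
From Stdlib Require Import Lra Lia Wf_nat.
Import ListNotations.
Open Scope R_scope.

(* Let h be anonymous, feasible and welfare dominating VCG, and
   let gap := h - vcg_h on profiles of n-1 types.  The tax difference
   total_tax h - total_tax vcg at a profile th is the sum of gap(th_{-i}).
   Wherever VCG is budget balanced (no player is pivotal), feasibility and
   domination squeeze that sum to 0.  Fix l in [0,c]^(n-1) and a value e,
   namely e = c if the others' sum is at least (n-1)c/n and e = 0 otherwise;
   then VCG is balanced at e :: l, and the balance equation reads
     gap l + sum_j gap (e :: l_{-j}) = 0.
   By symmetry the j-th term equals gap l when l_j = e, and by induction on
   the number of entries different from e it is 0 otherwise; hence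
   (1 + m) gap l = 0 with m >= 0, so gap vanishes everywhere.  The tax
   difference is then identically 0, contradicting strict dominance. *)

Lemma sumR_cons (x : R) (l : list R) : sumR (x :: l) = x + sumR l.
Proof. reflexivity. Qed.

Lemma sumR_perm (l1 l2 : list R) : Permutation l1 l2 -> sumR l1 = sumR l2.
Proof. induction 1; rewrite ?sumR_cons; lra. Qed.

Lemma sumR_map_zero {A : Type} (F : A -> R) (s : list A) :
  (forall i, In i s -> F i = 0) -> sumR (map F s) = 0.
Proof.
  induction s as [|a s IH]; intros H; [reflexivity|].
  simpl map; rewrite sumR_cons, H, IH; [lra | intros; apply H | ]; simpl; auto.
Qed.

Lemma sumR_map_two_valued {A : Type} (F : A -> R) (a : R) (s : list A) :
  (forall i, In i s -> F i = a \/ F i = 0) ->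
  exists m, 0 <= m /\ sumR (map F s) = m * a.
Proof.
  induction s as [|x s IH]; intros H.
  - exists 0; simpl; lra.
  - destruct IH as [m [Hm Hs]]; [intros; apply H; simpl; auto|].
    simpl map; rewrite sumR_cons, Hs.
    destruct (H x (or_introl eq_refl)) as [E|E]; rewrite E.
    + exists (m + 1); split; [lra | ring].
    + exists m; split; [lra | ring].
Qed.

Lemma remove_nth_nil (j : nat) : remove_nth j [] = [].
Proof. destruct j; reflexivity. Qed.

Lemma sumR_remove_nth (l : list R) (j : nat) :
  sumR (remove_nth j l) = sumR l - nth j l 0.
Proof.
  revert j; induction l as [|a l IH]; intros [|j].
  - simpl; lra.
  - rewrite remove_nth_nil; simpl; lra.
  - change (remove_nth 0 (a :: l)) with l; rewrite sumR_cons; simpl; lra.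
  - change (remove_nth (S j) (a :: l)) with (a :: remove_nth j l).
    rewrite !sumR_cons, IH; simpl; lra.
Qed.

Lemma remove_nth_length (l : list R) (j : nat) :
  (j < length l)%nat -> length (remove_nth j l) = (length l - 1)%nat.
Proof.
  revert j; induction l as [|a l IH]; intros [|j] Hj; simpl in Hj; try lia.
  - change (remove_nth 0 (a :: l)) with l; simpl; lia.
  - change (remove_nth (S j) (a :: l)) with (a :: remove_nth j l).
    simpl; rewrite IH by lia; lia.
Qed.

Lemma Forall_remove_nth (P : R -> Prop) (l : list R) (j : nat) :
  Forall P l -> Forall P (remove_nth j l).
Proof.
  revert j; induction l as [|a l IH]; intros [|j] H.
  - constructor.
  - rewrite remove_nth_nil; constructor.
  - inversion H; auto.
  - inversion H; subst.
    change (remove_nth (S j) (a :: l)) with (a :: remove_nth j l); auto.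
Qed.

Lemma remove_nth_perm (e : R) (l : list R) (j : nat) :
  (j < length l)%nat -> nth j l 0 = e -> Permutation l (e :: remove_nth j l).
Proof.
  revert j; induction l as [|a l IH]; intros [|j] Hj He; simpl in Hj, He; try lia.
  - subst; apply Permutation_refl.
  - change (remove_nth (S j) (a :: l)) with (a :: remove_nth j l).
    eapply perm_trans; [apply perm_skip, (IH j); [lia | exact He] | apply perm_swap].
Qed.

Lemma sum_remove_cons (F : list R -> R) (e : R) (l : list R) :
  sumR (map (fun i => F (remove_nth i (e :: l))) (seq 0 (S (length l))))
  = F l + sumR (map (fun j => F (e :: remove_nth j l)) (seq 0 (length l))).
Proof.
  cbn [seq map]; rewrite sumR_cons, <- seq_shift, map_map; reflexivity.
Qed.

Lemma nth_in_range (c : R) (l : list R) (j : nat) :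
  0 <= c -> Forall (fun x => 0 <= x <= c) l -> 0 <= nth j l 0 <= c.
Proof.
  intros Hc H; revert j; induction H as [|a l Ha Hl IH]; intros [|j]; simpl; auto; lra.
Qed.

Lemma valid_cons (k : nat) (c e : R) (l : list R) :
  valid_profile k c l -> 0 <= e <= c -> valid_profile (S k) c (e :: l).
Proof. intros [Hl Hf] He; split; [simpl; lia | constructor; auto]. Qed.

Lemma valid_remove_nth (k : nat) (c : R) (l : list R) (j : nat) :
  valid_profile k c l -> (j < k)%nat -> valid_profile (k - 1) c (remove_nth j l).
Proof.
  intros [Hl Hf] Hj; split; [rewrite remove_nth_length; lia | now apply Forall_remove_nth].
Qed.

Lemma valid_replace (k : nat) (c e : R) (l : list R) (j : nat) :
  valid_profile k c l -> 0 <= e <= c -> (j < length l)%nat ->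
  valid_profile k c (e :: remove_nth j l).
Proof.
  intros Hv He Hj; destruct Hv as [Hl Hf].
  replace k with (S (k - 1)) by lia.
  apply valid_cons; [apply valid_remove_nth; [split|]; auto; lia | exact He].
Qed.

(* Number of entries of l different from e: the induction measure. *)
Fixpoint n_off (e : R) (l : list R) : nat :=
  match l with
  | [] => 0
  | x :: l' => if Req_EM_T x e then n_off e l' else S (n_off e l')
  end.

Lemma n_off_replace (e : R) (l : list R) (j : nat) :
  (j < length l)%nat -> nth j l 0 <> e ->
  (n_off e (e :: remove_nth j l) < n_off e l)%nat.
Proof.
  intros Hj Hne; cbn [n_off]; destruct (Req_EM_T e e) as [_|]; [|congruence].
  revert j Hj Hne; induction l as [|a l IH]; intros [|j] Hj Hne;
    cbn [length nth] in Hj, Hne; try lia.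
  - change (remove_nth 0 (a :: l)) with l; cbn [n_off].
    destruct (Req_EM_T a e); [contradiction | lia].
  - change (remove_nth (S j) (a :: l)) with (a :: remove_nth j l); cbn [n_off].
    specialize (IH j ltac:(lia) Hne).
    destruct (Req_EM_T a e); lia.
Qed.

Section Propagation.

Variables (g : list R -> R) (e : R) (Q : list R -> Prop).

Hypothesis g_perm :
  forall l l', Q l -> Q l' -> Permutation l l' -> g l = g l'.
Hypothesis Q_replace :
  forall l j, Q l -> (j < length l)%nat -> Q (e :: remove_nth j l).
Hypothesis g_balance :
  forall l, Q l ->
    g l + sumR (map (fun j => g (e :: remove_nth j l)) (seq 0 (length l))) = 0.

Lemma propagation (l : list R) : Q l -> g l = 0.
Proof.
  remember (n_off e l) as k eqn:Hk; revert l Hk.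
  induction k as [k IH] using lt_wf_ind; intros l Hk Hl.
  destruct (sumR_map_two_valued (fun j => g (e :: remove_nth j l)) (g l)
              (seq 0 (length l))) as [m [Hm Hsum]].
  - intros j Hj; apply in_seq in Hj.
    destruct (Req_EM_T (nth j l 0) e) as [Heq | Hne].
    + left; symmetry; apply g_perm; auto; [apply Q_replace; auto; lia|].
      apply remove_nth_perm; auto; lia.
    + right; apply (IH (n_off e (e :: remove_nth j l))); auto.
      * subst k; apply n_off_replace; auto; lia.
      * apply Q_replace; auto; lia.
  - pose proof (g_balance l Hl) as Hb; rewrite Hsum in Hb.
    assert (Hprod : (1 + m) * g l = 0) by lra.
    apply Rmult_integral in Hprod; destruct Hprod; lra.
Qed.

End Propagation.

Lemma total_tax_diff (n : nat) (c : R) (h h' : list R -> R) (th : list R) :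
  total_tax n c h th - total_tax n c h' th
  = sumR (map (fun i => h (remove_nth i th) - h' (remove_nth i th)) (seq 0 n)).
Proof.
  unfold total_tax; induction (seq 0 n) as [|i s IH]; simpl map.
  - simpl; lra.
  - rewrite !sumR_cons, <- IH; unfold groves_tax; lra.
Qed.

Lemma vcg_h_perm (n : nat) (c : R) (l1 l2 : list R) :
  Permutation l1 l2 -> vcg_h n c l1 = vcg_h n c l2.
Proof.
  intros H; unfold vcg_h.
  now rewrite (sumR_perm _ _ (Permutation_map (v n c false) H)),
              (sumR_perm _ _ (Permutation_map (v n c true) H)).
Qed.

Lemma sum_v_false (n : nat) (c : R) (l : list R) : sumR (map (v n c false) l) = 0.
Proof. apply sumR_map_zero; intros x _; unfold v, dval; ring. Qed.

Lemma sum_v_true (n : nat) (c : R) (l : list R) :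
  sumR (map (v n c true) l) = sumR l - INR (length l) * (c / INR n).
Proof.
  induction l as [|x l IH]; simpl map; [simpl; lra|].
  rewrite !sumR_cons, IH; cbn [length]; rewrite S_INR; unfold v, dval; ring.
Qed.

(* Total cost share of the n-1 other players: they want the project on their
   own iff the sum of their types exceeds it. *)
Definition others_share (n : nat) (c : R) : R := INR (n - 1) * (c / INR n).

Lemma others_share_bounds (n : nat) (c : R) :
  (0 < n)%nat -> 0 < c -> 0 <= others_share n c < c.
Proof.
  intros Hn Hc; unfold others_share.
  assert (Hnpos : 0 < INR n) by (apply lt_0_INR; lia).
  assert (Hcn : 0 < c / INR n) by (apply Rdiv_lt_0_compat; lra).
  rewrite minus_INR by lia; simpl INR.
  replace ((INR n - 1) * (c / INR n)) with (c - c / INR n) by (field; lra).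
  split; [|lra].
  assert (Hle : c / INR n <= c).
  { apply (Rmult_le_reg_r (INR n)); [lra|].
    unfold Rdiv; rewrite Rmult_assoc, Rinv_l by lra.
    assert (1 <= INR n) by (apply (le_INR 1); lia); nra. }
  lra.
Qed.

Lemma nonpivotal_tax_zero (n : nat) (c : R) (th : list R) (i : nat) :
  length (remove_nth i th) = (n - 1)%nat ->
  (c <= sumR th -> others_share n c <= sumR (remove_nth i th)) ->
  (sumR th < c -> sumR (remove_nth i th) <= others_share n c) ->
  groves_tax n c (vcg_h n c) th i = 0.
Proof.
  intros Hlen Hhigh Hlow; unfold groves_tax, vcg_h, Defs.f, others_share in *.
  rewrite sum_v_false, sum_v_true, Hlen.
  destruct (Rle_dec c (sumR th)) as [Hge | Hlt]; cbv iota.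
  - specialize (Hhigh Hge); rewrite sum_v_true, Hlen.
    unfold Rmax; destruct Rle_dec; lra.
  - specialize (Hlow (Rnot_le_lt _ _ Hlt)); rewrite sum_v_false.
    unfold Rmax; destruct Rle_dec; lra.
Qed.

(* If the others' sum reaches their share, adding a player of type c makes
   nobody pivotal, so VCG is budget balanced. *)
Lemma vcg_balanced_high (n : nat) (c : R) (l : list R) :
  (0 < n)%nat -> 0 < c -> valid_profile (n - 1) c l -> others_share n c <= sumR l ->
  total_tax n c (vcg_h n c) (c :: l) = 0.
Proof.
  intros Hn Hc Hv Hl; pose proof (others_share_bounds n c Hn Hc) as Hb.
  assert (Hv' : valid_profile n c (c :: l)).
  { replace n with (S (n - 1)) by lia; apply valid_cons; auto; lra. }
  unfold total_tax; apply sumR_map_zero; intros i Hi; apply in_seq in Hi.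
  pose proof (nth_in_range c (c :: l) i ltac:(lra) (proj2 Hv')) as Hr.
  apply nonpivotal_tax_zero; rewrite ?sumR_remove_nth, ?sumR_cons.
  - rewrite remove_nth_length; destruct Hv'; lia.
  - lra.
  - lra.
Qed.

(* If the others' sum stays below their share, adding a player of type 0
   makes nobody pivotal, so VCG is budget balanced. *)
Lemma vcg_balanced_low (n : nat) (c : R) (l : list R) :
  (0 < n)%nat -> 0 < c -> valid_profile (n - 1) c l -> sumR l < others_share n c ->
  total_tax n c (vcg_h n c) (0 :: l) = 0.
Proof.
  intros Hn Hc Hv Hl; pose proof (others_share_bounds n c Hn Hc) as Hb.
  assert (Hv' : valid_profile n c (0 :: l)).
  { replace n with (S (n - 1)) by lia; apply valid_cons; auto; lra. }
  unfold total_tax; apply sumR_map_zero; intros i Hi; apply in_seq in Hi.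
  pose proof (nth_in_range c (0 :: l) i ltac:(lra) (proj2 Hv')) as Hr.
  apply nonpivotal_tax_zero; rewrite ?sumR_remove_nth, ?sumR_cons.
  - rewrite remove_nth_length; destruct Hv'; lia.
  - lra.
  - lra.
Qed.

Section Dominating.

Variables (n : nat) (c : R) (h : list R -> R).
Hypothesis n_pos : (0 < n)%nat.
Hypothesis c_pos : 0 < c.
Hypothesis h_sym : symmetric_h n c h.
Hypothesis h_feasible : feasible n c h.
Hypothesis h_dominates : welfare_dominates n c h (vcg_h n c).

Definition gap (l : list R) : R := h l - vcg_h n c l.

(* Where VCG is budget balanced, feasibility and domination squeeze the
   tax difference to 0. *)
Lemma gap_sum_zero (th : list R) :
  valid_profile n c th -> total_tax n c (vcg_h n c) th = 0 ->
  sumR (map (fun i => gap (remove_nth i th)) (seq 0 n)) = 0.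
Proof.
  intros Hv Hbal; unfold gap; rewrite <- (total_tax_diff n c h (vcg_h n c) th).
  pose proof (proj1 h_dominates th Hv); pose proof (h_feasible th Hv); lra.
Qed.

Lemma gap_vanishes_on (e : R) (Q : list R -> Prop) :
  0 <= e <= c ->
  (forall l, Q l -> valid_profile (n - 1) c l) ->
  (forall l j, Q l -> (j < length l)%nat -> Q (e :: remove_nth j l)) ->
  (forall l, Q l -> total_tax n c (vcg_h n c) (e :: l) = 0) ->
  forall l, Q l -> gap l = 0.
Proof.
  intros He HQv HQr HQb; apply (propagation gap e Q); auto.
  - intros l l' Hl Hl' P; unfold gap.
    now rewrite (h_sym l l' (HQv l Hl) (HQv l' Hl') P), (vcg_h_perm n c l l' P).
  - intros l Hl; pose proof (HQv l Hl) as [Hlen Hf].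
    assert (Hv : valid_profile n c (e :: l)).
    { replace n with (S (n - 1)) by lia; apply valid_cons; auto; split; auto. }
    pose proof (gap_sum_zero _ Hv (HQb l Hl)) as Hs.
    replace (seq 0 n) with (seq 0 (S (length l))) in Hs by (f_equal; lia).
    now rewrite sum_remove_cons in Hs.
Qed.

Lemma gap_vanishes (l : list R) : valid_profile (n - 1) c l -> gap l = 0.
Proof.
  intros Hv; pose proof (others_share_bounds n c n_pos c_pos) as Hb.
  destruct (Rle_or_lt (others_share n c) (sumR l)) as [Hhigh | Hlow].
  - apply (gap_vanishes_on c (fun l => valid_profile (n - 1) c l /\
                                        others_share n c <= sumR l));
      [lra | now intros l' [] | | | auto].
    + intros l' j [Hv' Hs] Hj; split; [apply valid_replace; auto; lra|].
      pose proof (nth_in_range c l' j ltac:(lra) (proj2 Hv')).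
      rewrite sumR_cons, sumR_remove_nth; lra.
    + intros l' [Hv' Hs]; now apply vcg_balanced_high.
  - apply (gap_vanishes_on 0 (fun l => valid_profile (n - 1) c l /\
                                        sumR l < others_share n c));
      [lra | now intros l' [] | | | auto].
    + intros l' j [Hv' Hs] Hj; split; [apply valid_replace; auto; lra|].
      pose proof (nth_in_range c l' j ltac:(lra) (proj2 Hv')).
      rewrite sumR_cons, sumR_remove_nth; lra.
    + intros l' [Hv' Hs]; now apply vcg_balanced_low.
Qed.

End Dominating.

Theorem lemma3 (n : nat) (c : R) (Hn : (2 <= n)%nat) (Hc : 0 < c) :
  ~ (exists h : list R -> R,
       symmetric_h n c h /\ feasible n c h /\ welfare_dominates n c h (vcg_h n c)).
Proof.
  intros [h [Hsym [Hfeas Hdom]]].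
  destruct (proj2 Hdom) as [th [Hv Hlt]].
  assert (Hdiff : total_tax n c h th - total_tax n c (vcg_h n c) th = 0).
  { rewrite total_tax_diff; apply sumR_map_zero; intros i Hi; apply in_seq in Hi.
    apply (gap_vanishes n c h); auto; [lia|].
    apply valid_remove_nth; auto; lia. }
  lra.
Qed.
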